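(* Let $E,m>0$, $\ell_z\in\mathbb{R}$, $\ell\ge 0$, and let $(x,p)\in\Gamma$ be a point with $F_0(x,p)=\tfrac12m^2$, $F_1(x,p)=E$, $F_2(x,p)=\ell_z$, $F_3(x,p)=\ell^2$, where $x$ has radial coordinate $r$. Then the differentials $dF_0,dF_1,dF_2,dF_3$ at $(x,p)$ are linearly independent, unless one of the following two cases occurs: (a) $|\ell_z|=\ell$ (motion confined to the equatorial plane); (b) $V_{m,\ell}(r)=E^2$ and $\frac{d}{dr}V_{m,\ell}(r)=0$ (circular trajectories).
   Context: Fix $M_H>0$. Let $M$ be the region of the extended Schwarzschild spacetime covered by horizon-penetrating coordinates $(t,r,\vartheta,\varphi)$, $t\in\mathbb{R}$, $r>0$, in which the inverse metric is $g^{-1}=-(1+\tfrac{2M_H}{r})\partial_t\otimes\partial_t+\tfrac{4M_H}{r}\partial_t\otimes_s\partial_r+(1-\tfrac{2M_H}{r})\partial_r\otimes\partial_r+\tfrac{1}{r^2}(\partial_\vartheta\otimes\partial_\vartheta+\tfrac{1}{\sin^2\vartheta}\partial_\varphi\otimes\partial_\varphi)$. On $T^*M$ use adapted coordinates $(x^\mu,p_\mu)$ with $p=p_\mu dx^\mu$. The free-particle Hamiltonian is $H=\tfrac12 g^{\mu\nu}p_\mu p_\nu$; $\Gamma$ is the set of $(x,p)\in T^*M$ with $p$ timelike and future-directed. Define $F_0=-H$, $F_1=-p_t$, $F_2=p_\varphi$, $F_3=p_\vartheta^2+p_\varphi^2/\sin^2\vartheta$, and $V_{m,\ell}(r)=(1-2M_H/r)(m^2+\ell^2/r^2)$.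 *)

From Stdlib Require Import Reals Lra.
From Coquelicot Require Import Coquelicot.
Open Scope R_scope.

(* A point of T*M in adapted coordinates, as a function nat -> R with
   index 0 = t, 1 = r, 2 = theta, 3 = phi, 4 = p_t, 5 = p_r,
   6 = p_theta, 7 = p_phi  (indices >= 8 are irrelevant). *)
Definition PS := nat -> R.

Definition c_t (z : PS) := z 0%nat.
Definition c_r (z : PS) := z 1%nat.
Definition c_th (z : PS) := z 2%nat.
Definition c_ph (z : PS) := z 3%nat.
Definition c_pt (z : PS) := z 4%nat.
Definition c_pr (z : PS) := z 5%nat.
Definition c_pth (z : PS) := z 6%nat.
Definition c_pph (z : PS) := z 7%nat.

(* Inverse metric components (a (x)_s b = (a(x)b + b(x)a)/2, so g^{tr} = 2M_H/r). *)
Definition g_tt (MH r : R) := - (1 + 2 * MH / r).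
Definition g_tr (MH r : R) := 2 * MH / r.
Definition g_rr (MH r : R) := 1 - 2 * MH / r.

Definition gpp (MH : R) (z : PS) : R :=
  let r := c_r z in
  g_tt MH r * c_pt z ^ 2 + 2 * g_tr MH r * c_pt z * c_pr z
  + g_rr MH r * c_pr z ^ 2
  + (c_pth z ^ 2 + c_pph z ^ 2 / (sin (c_th z)) ^ 2) / r ^ 2.

Definition Ham (MH : R) (z : PS) : R := / 2 * gpp MH z.

Definition in_chart (z : PS) : Prop := 0 < c_r z /\ 0 < c_th z < PI.

Definition p_up_t (MH : R) (z : PS) : R :=
  g_tt MH (c_r z) * c_pt z + g_tr MH (c_r z) * c_pr z.

(* Gamma: p timelike and future-directed (time orientation given by the
   time function t, whose differential dt is timelike: p future-directed iff
   p^t > 0). *)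
Definition in_Gamma (MH : R) (z : PS) : Prop :=
  in_chart z /\ gpp MH z < 0 /\ 0 < p_up_t MH z.

Definition F0 (MH : R) (z : PS) : R := - Ham MH z.
Definition F1 (z : PS) : R := - c_pt z.
Definition F2 (z : PS) : R := c_pph z.
Definition F3 (z : PS) : R := c_pth z ^ 2 + c_pph z ^ 2 / (sin (c_th z)) ^ 2.

Definition Veff (MH m l r : R) : R := (1 - 2 * MH / r) * (m ^ 2 + l ^ 2 / r ^ 2).

Definition upd (z : PS) (k : nat) (s : R) : PS :=
  fun j => if Nat.eqb j k then s else z j.

Definition dF (F : PS -> R) (z : PS) : nat -> R :=
  fun k => Derive (fun s => F (upd z k s)) (z k).

Definition lin_indep4 (v0 v1 v2 v3 : nat -> R) : Prop :=
  forall c0 c1 c2 c3 : R,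
    (forall k : nat, (k < 8)%nat ->
       c0 * v0 k + c1 * v1 k + c2 * v2 k + c3 * v3 k = 0) ->
    c0 = 0 /\ c1 = 0 /\ c2 = 0 /\ c3 = 0.

From Stdlib Require Import Reals Lra Lia.
From Coquelicot Require Import Coquelicot.
Open Scope R_scope.

(* Among the four differentials only dF0 has components along dr and dp_r,
   namely -(1/2) d_r g(p,p) and -p^r.  A dependence involving dF0 therefore
   forces p^r = 0 and d_r g(p,p) = 0.  On the mass shell
   (1 - 2M/r) g(p,p) = (p^r)^2 - E^2 + (1 - 2M/r) l^2/r^2, i.e.
   V(r) = E^2 - (p^r)^2, so such a point is a double root of E^2 - V: a
   circular orbit.  Otherwise dF1 = -dp_t and dF2 = dp_phi, and dF3 lies in
   their span only if p_theta = 0 and d_theta F3 = 0; the latter forces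
   p_phi cos theta = 0, hence F3 = p_phi^2: the motion is equatorial. *)

Definition p_up_r (MH : R) (z : PS) : R :=
  g_tr MH (c_r z) * c_pt z + g_rr MH (c_r z) * c_pr z.

Lemma dF_const (F : PS -> R) (z : PS) (k : nat) :
  (forall s, F (upd z k s) = F z) -> dF F z k = 0.
Proof.
intros HF; unfold dF.
rewrite (Derive_ext _ (fun _ => F z)) by exact HF.
apply Derive_const.
Qed.

Lemma dF_coord (z : PS) (j k : nat) :
  dF (fun w => w j) z k = if Nat.eqb j k then 1 else 0.
Proof.
unfold dF, upd; destruct (Nat.eqb j k).
- apply Derive_id.
- apply Derive_const.
Qed.

Lemma dF_opp (F : PS -> R) (z : PS) (k : nat) :
  dF (fun w => - F w) z k = - dF F z k.
Proof. apply Derive_opp. Qed.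

Lemma dF_F1 (z : PS) (k : nat) : dF F1 z k = - (if Nat.eqb 4 k then 1 else 0).
Proof. unfold F1, c_pt; rewrite dF_opp, dF_coord; reflexivity. Qed.

Lemma dF_F2 (z : PS) (k : nat) : dF F2 z k = if Nat.eqb 7 k then 1 else 0.
Proof. apply dF_coord. Qed.

Lemma dF_F3_eq0 (z : PS) (k : nat) :
  (2 <> k)%nat -> (6 <> k)%nat -> (7 <> k)%nat -> dF F3 z k = 0.
Proof.
intros H2 H6 H7; apply dF_const; intros s.
unfold F3, c_th, c_pth, c_pph, upd.
apply Nat.eqb_neq in H2, H6, H7; rewrite H2, H6, H7; reflexivity.
Qed.

Lemma dF_F3_pth (z : PS) : dF F3 z 6 = 2 * c_pth z.
Proof.
unfold dF; apply is_derive_unique; unfold F3, c_th, c_pth, c_pph; cbv [upd Nat.eqb].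
auto_derive; [exact I | ring].
Qed.

Lemma dF_F3_th (z : PS) :
  sin (c_th z) <> 0 -> dF F3 z 2 = -2 * c_pph z ^ 2 * cos (c_th z) / sin (c_th z) ^ 3.
Proof.
intros Hs; unfold dF; apply is_derive_unique; unfold F3, c_th, c_pth, c_pph in *.
cbv [upd Nat.eqb]; auto_derive.
- rewrite Rmult_1_r; exact (Rmult_integral_contrapositive_currified _ _ Hs Hs).
- field; exact Hs.
Qed.

Lemma dF_F0_r (MH : R) (z : PS) :
  c_r z <> 0 ->
  dF (F0 MH) z 1 = F3 z / c_r z ^ 3 - MH / c_r z ^ 2 * (c_pt z - c_pr z) ^ 2.
Proof.
intros Hr; unfold dF; apply is_derive_unique.
unfold F0, F3, Ham, gpp, g_tt, g_tr, g_rr, c_r, c_th, c_pt, c_pr, c_pth, c_pph in *.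
cbv [upd Nat.eqb].
(* Kept opaque so that differentiating in r raises no [sin theta <> 0] side condition. *)
set (angular := z 7%nat ^ 2 / sin (z 2%nat) ^ 2).
auto_derive.
- rewrite Rmult_1_r; repeat split; auto using Rmult_integral_contrapositive_currified.
- field; exact Hr.
Qed.

Lemma dF_F0_pr (MH : R) (z : PS) : c_r z <> 0 -> dF (F0 MH) z 5 = - p_up_r MH z.
Proof.
intros Hr; unfold dF; apply is_derive_unique.
unfold F0, Ham, gpp, p_up_r, g_tt, g_tr, g_rr, c_r, c_th, c_pt, c_pr, c_pth, c_pph in *.
cbv [upd Nat.eqb]; auto_derive; [exact I | field; exact Hr].
Qed.

Lemma Derive_Veff (MH m l r : R) : r <> 0 ->
  Derive (Veff MH m l) r
  = 2 * (MH / r ^ 2) * (m ^ 2 + l ^ 2 / r ^ 2) - 2 * (1 - 2 * MH / r) * (l ^ 2 / r ^ 3).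
Proof.
intros Hr; apply is_derive_unique; unfold Veff; auto_derive.
- rewrite Rmult_1_r; repeat split; auto using Rmult_integral_contrapositive_currified.
- field; exact Hr.
Qed.

Lemma Veff_mass_shell (MH m l : R) (z : PS) :
  c_r z <> 0 -> F0 MH z = / 2 * m ^ 2 -> F3 z = l ^ 2 ->
  Veff MH m l (c_r z) = c_pt z ^ 2 - p_up_r MH z ^ 2.
Proof.
intros Hr H0 H3.
assert (Hm : m ^ 2 = - gpp MH z) by (unfold F0, Ham in H0; lra).
unfold Veff; rewrite Hm, <- H3.
unfold gpp, p_up_r, g_tt, g_tr, g_rr; fold (F3 z); field; exact Hr.
Qed.

Lemma circular_of_radial_turning_point (MH m l : R) (z : PS) :
  c_r z <> 0 -> c_pt z <> 0 -> F0 MH z = / 2 * m ^ 2 -> F3 z = l ^ 2 ->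
  dF (F0 MH) z 1 = 0 -> dF (F0 MH) z 5 = 0 ->
  Veff MH m l (c_r z) = c_pt z ^ 2 /\ Derive (Veff MH m l) (c_r z) = 0.
Proof.
intros Hr Hpt H0 H3 Hdr Hdpr.
rewrite dF_F0_pr in Hdpr by exact Hr.
assert (HV : Veff MH m l (c_r z) = c_pt z ^ 2).
{ rewrite (Veff_mass_shell MH m l z Hr H0 H3); replace (p_up_r MH z) with 0 by lra; ring. }
split; [exact HV|].
rewrite dF_F0_r, H3 in Hdr by exact Hr.
rewrite Derive_Veff by exact Hr.
unfold Veff in HV; unfold p_up_r, g_tr, g_rr in Hdpr.
assert (Hw : (1 - 2 * MH / c_r z) * (c_pr z - c_pt z) = - c_pt z) by lra.
set (f := 1 - 2 * MH / c_r z) in *.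
set (X := m ^ 2 + l ^ 2 / c_r z ^ 2) in *.
set (c := MH / c_r z ^ 2) in *.
assert (Hf : f <> 0) by (intros Hf; rewrite Hf in Hw; lra).
replace (l ^ 2 / c_r z ^ 3) with (c * (c_pt z - c_pr z) ^ 2) by lra.
apply (Rmult_eq_reg_l f); [|exact Hf].
replace (f * (2 * c * X - 2 * f * (c * (c_pt z - c_pr z) ^ 2)))
  with (2 * c * (f * X) - 2 * c * (f * (c_pr z - c_pt z)) ^ 2) by ring.
rewrite HV, Hw; ring.
Qed.

Lemma F3_eq_F2_sq_of_angular_turning_point (z : PS) :
  sin (c_th z) <> 0 -> c_pth z = 0 -> dF F3 z 2 = 0 -> F3 z = F2 z ^ 2.
Proof.
intros Hs Hpth Hdth.
rewrite dF_F3_th in Hdth by exact Hs.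
unfold F3, F2; rewrite Hpth.
assert (Hpc : c_pph z ^ 2 * cos (c_th z) = 0).
{ replace (c_pph z ^ 2 * cos (c_th z))
    with (-2 * c_pph z ^ 2 * cos (c_th z) / sin (c_th z) ^ 3 * (- sin (c_th z) ^ 3 / 2))
    by (field; exact Hs).
  rewrite Hdth; ring. }
destruct (Rmult_integral _ _ Hpc) as [Hp | Hc].
- rewrite Hp; unfold Rdiv; ring.
- assert (Hs1 : sin (c_th z) ^ 2 = 1).
  { pose proof (sin2_cos2 (c_th z)) as Hsc; unfold Rsqr in Hsc; rewrite Hc in Hsc; lra. }
  rewrite Hs1; field.
Qed.

Section LinearDependence.

Variables (MH c0 c1 c2 c3 : R) (z : PS).
Hypothesis Hdep : forall k : nat, (k < 8)%nat ->
  c0 * dF (F0 MH) z k + c1 * dF F1 z k + c2 * dF F2 z k + c3 * dF F3 z k = 0.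

Lemma dependence_radial_components :
  c0 <> 0 -> dF (F0 MH) z 1 = 0 /\ dF (F0 MH) z 5 = 0.
Proof.
intros Hc0.
assert (E1 := Hdep 1 ltac:(lia)); assert (E5 := Hdep 5 ltac:(lia)).
rewrite dF_F1, dF_F2, dF_F3_eq0 in E1, E5 by discriminate; simpl in E1, E5.
split; apply (Rmult_eq_reg_l c0); lra.
Qed.

Lemma dependence_angular_components :
  c0 = 0 -> c3 <> 0 -> c_pth z = 0 /\ dF F3 z 2 = 0.
Proof.
intros Hc0 Hc3.
assert (E2 := Hdep 2 ltac:(lia)); assert (E6 := Hdep 6 ltac:(lia)).
rewrite dF_F1, dF_F2, Hc0 in E2, E6; rewrite dF_F3_pth in E6; simpl in E2, E6.
split; apply (Rmult_eq_reg_l c3); lra.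
Qed.

Lemma dependence_trivial : c0 = 0 -> c3 = 0 -> c1 = 0 /\ c2 = 0.
Proof.
intros Hc0 Hc3.
assert (E4 := Hdep 4 ltac:(lia)); assert (E7 := Hdep 7 ltac:(lia)).
rewrite dF_F1, dF_F2, Hc0, Hc3 in E4, E7; simpl in E4, E7.
split; lra.
Qed.

End LinearDependence.

Theorem lemma2 (MH E m lz l : R) (z : PS) :
  0 < MH -> 0 < E -> 0 < m -> 0 <= l ->
  in_Gamma MH z ->
  F0 MH z = / 2 * m ^ 2 ->
  F1 z = E ->
  F2 z = lz ->
  F3 z = l ^ 2 ->
  ~ (Rabs lz = l) ->
  ~ (Veff MH m l (c_r z) = E ^ 2 /\ Derive (Veff MH m l) (c_r z) = 0) ->
  lin_indep4 (dF (F0 MH) z) (dF F1 z) (dF F2 z) (dF F3 z).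
Proof.
intros _ HE _ Hl [[Hr Hth] _] H0 H1 H2 H3 Hequatorial Hcircular c0 c1 c2 c3 Hdep.
assert (Hs : sin (c_th z) <> 0) by (apply Rgt_not_eq, sin_gt_0; lra).
destruct (Req_dec c0 0) as [Hc0 | Hc0].
- destruct (Req_dec c3 0) as [Hc3 | Hc3].
  + destruct (dependence_trivial MH c0 c1 c2 c3 z Hdep Hc0 Hc3); auto.
  + exfalso; apply Hequatorial.
    destruct (dependence_angular_components MH c0 c1 c2 c3 z Hdep Hc0 Hc3) as [Hpth Hdth].
    pose proof (F3_eq_F2_sq_of_angular_turning_point z Hs Hpth Hdth) as Hl2.
    rewrite H2, H3, <- !Rsqr_pow2 in Hl2.
    rewrite <- (Rabs_pos_eq l Hl); symmetry; exact (Rsqr_eq_abs_0 _ _ Hl2).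
- exfalso; apply Hcircular.
  destruct (dependence_radial_components MH c0 c1 c2 c3 z Hdep Hc0) as [Hdr Hdpr].
  unfold F1 in H1; replace (E ^ 2) with (c_pt z ^ 2) by (rewrite <- H1; ring).
  apply circular_of_radial_turning_point; auto; lra.
Qed.
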